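(* Let $P$ be a finite geometric lattice of rank $n$ with a fixed atom ordering, and let $S=\{s_1<\dots<s_r\}\subseteq\{1,\dots,n-1\}$. Then for every filling $F$ of the ribbon $\mathrm{Rib}(s_1,s_2-s_1,\dots,n-s_r)$ whose entries are the elements of a basis of the matroid of $P$ (that is, $n$ atoms whose join is $\hat1$), the alternating sum $\bar f_{chain}(v_F)$ of maximal chains of $P^S$ is a cycle: its boundary in the chain complex of the order complex of $P^S$ is $0$.
   Context: $P^S$ is the subposet of elements with ranks in $S$; its order complex has simplices the chains, oriented in increasing order, with boundary $d(u_1<\dots<u_k)=\sum_{i}(-1)^{i-1}(u_1<\dots<\widehat{u_i}<\dots<u_k)$. $\mathrm{Rib}(r_1,\dots,r_m)$ is the ribbon (connected skew shape with no $2\times2$ square) with rows of lengths $r_1,\dots,r_m$ from bottom to top, each row beginning directly above the last box of the row below. The reading word $(F_1,\dots,F_n)$ of a filling lists entries left to right in each row, rows bottom to top. The tabloid $\{F\}$ is $F$ modulo permutations of entries within rows; $v_F=\sum_{\sigma\in\mathrm{Col}_F}\mathrm{sgn}(\sigma)\{\sigma F\}$ where $\mathrm{Col}_F$ consists of permutations of the entries preserving each column. $\bar f_{chain}(\{F\})$ is the maximal chain $F_1\vee\dots\vee F_{s_1}<F_1\vee\dots\vee F_{s_2}<\dots<F_1\vee\dots\vee F_{s_r}$ of $P^S$, extended linearly. *)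

From HB Require Import structures.
From mathcomp Require Import all_boot all_order all_algebra all_fingroup.
Set Implicit Arguments. Unset Strict Implicit. Unset Printing Implicit Defensive.
Import Order.TTheory GRing.Theory.

Local Open Scope order_scope.

Section Lattice.
Context {disp : Order.disp_t} (P : finTBLatticeType disp).

Definition covers (x y : P) : bool :=
  (x < y) && [forall z : P, ~~ ((x < z) && (z < y))].

Definition atom (a : P) : bool := covers \bot a.

Definition atomistic : Prop :=
  forall x : P, x = \join_(a : P | atom a && (a <= x)) a.

Definition semimodular : Prop :=
  forall x y : P, covers (x `&` y) x -> covers (x `&` y) y -> covers x (x `|` y).

Definition geometric : Prop := atomistic /\ semimodular.

Definition chain_len (x : P) (k : nat) : bool :=
  [exists t : k.-tuple P, path <%O \bot t && (last \bot t == x)].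

Definition rk (x : P) : nat :=
  \big[maxn/0%N]_(k < #|P| | chain_len x k) (k : nat).

Definition is_basis (n : nat) (F : 'I_n -> P) : Prop :=
  injective F /\ (forall i, atom (F i)) /\ \join_(i < n) F i = \top.

(** the chain F_1 \/ ... \/ F_{s_1} < ... < F_1 \/ ... \/ F_{s_r} (0-based positions) *)
Definition fchain (n : nat) (S : seq nat) (F : 'I_n -> P) : seq P :=
  [seq \join_(j < n | (j < s)%N) F j | s <- S].

End Lattice.

(** Ribbon Rib(r_1,...,r_m): positions 0..N-1 in reading order; position p lies in
    row (number of partial sums r_1+...+r_i that are <= p), and in column
    p - row (each row starts directly above the last box of the row below). *)
Definition rib_row (rs : seq nat) (p : nat) : nat :=
  count (fun s => s <= p)%N (scanl addn 0%N rs).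
Definition rib_col (rs : seq nat) (p : nat) : nat := (p - rib_row rs p)%N.

Definition rowlens (S : seq nat) (n : nat) : seq nat :=
  pairmap (fun a b => b - a)%N 0%N (rcons S n).

Definition col_perm (n : nat) (rs : seq nat) (s : {perm 'I_n}) : bool :=
  [forall p : 'I_n, rib_col rs (s p) == rib_col rs p].

Local Open Scope ring_scope.

(** formal Z-linear combinations of chains (simplices) *)
Definition fchains (T : Type) := seq (int * seq T).

Definition coef (T : eqType) (X : fchains T) (c : seq T) : int :=
  \sum_(x <- X | x.2 == c) x.1.

Definition face (T : Type) (u : seq T) (i : nat) : seq T := take i u ++ drop i.+1 u.

Definition boundary (T : Type) (X : fchains T) : fchains T :=
  flatten [seq [seq ((-1) ^+ i * x.1, face x.2 i) | i <- iota 0 (size x.2)] | x <- X].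

Definition is_cycle (T : eqType) (X : fchains T) : Prop :=
  forall c : seq T, coef (boundary X) c = 0.

(** \bar f_chain (v_F) = sum_{sigma in Col_F} sgn(sigma) f_chain({sigma F}),
    where (sigma F) puts the entry F p at position sigma p. *)
Definition fchain_vF {disp : Order.disp_t} (P : finTBLatticeType disp)
  (n : nat) (S : seq nat) (F : 'I_n -> P) : fchains P :=
  [seq ((-1) ^+ odd_perm s, fchain S (fun p => F ((s^-1)%g p)))
  | s <- enum [pred s : {perm 'I_n} | col_perm (rowlens S n) s]].

(** Fix the face obtained by deleting the element [F_1 \/ ... \/ F_y] (with
    [y = s_i]) from the chains.  The [y]-th and [(y+1)]-st boxes of the ribbon
    in reading order are the last box of row [i] and the first box of row
    [i+1], hence lie in the same column, so right multiplication by the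
    transposition [t] of these positions is an involution of [Col_F].  Since [t] only swaps [F_y] and [F_(y+1)], it
    changes no prefix join [F_1 \/ ... \/ F_k] with [k <> y], so [s] and [s t]
    contribute the same face with opposite signs and all these faces cancel. *)

From Pilot Require Import Defs.
From HB Require Import structures.
From mathcomp Require Import all_boot all_order all_algebra all_fingroup.
Import Order.TTheory GRing.Theory.

Set Implicit Arguments. Unset Strict Implicit. Unset Printing Implicit Defensive.

Local Open Scope ring_scope.

Lemma sum_sign_perm_eq0 (R : pzRingType) (T : finType) (A : pred {perm T}) (x y : T) :
  x != y -> (forall s, A (s * tperm x y)%g = A s) ->
  \sum_(s | A s) (-1) ^+ odd_perm s = 0 :> R.
Proof.
move=> xy At; rewrite (bigID (fun s => odd_perm s)) /=.
have odd_t s : odd_perm (s * tperm x y)%g = ~~ odd_perm s.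
  by rewrite odd_permM odd_tperm xy addbT.
rewrite (reindex_inj (mulIg (tperm x y))) /=.
under eq_bigl => s do rewrite At odd_t.
under eq_bigr => s /andP[_ /negbTE odd_s] do rewrite odd_t odd_s.
under [X in _ + X]eq_bigr => s /andP[_ /negbTE odd_s] do rewrite odd_s.
by rewrite expr1 expr0 sumrN addNr.
Qed.

Lemma count_leq_ltn_mem (L : seq nat) (a : nat) :
  count (fun x => x <= a)%N L = (count (fun x => x < a)%N L + count_mem a L)%N.
Proof.
by elim: L => //= b L ->; rewrite addnACA; case: ltngtP.
Qed.

Lemma rib_col_pred_partial_sum (rs : seq nat) (a : nat) :
  uniq (scanl addn 0 rs) -> a \in scanl addn 0 rs -> rib_col rs a.-1 = rib_col rs a.
Proof.
case: a => [//|a] uniq_L aL.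
rewrite /rib_col /rib_row [in RHS]count_leq_ltn_mem (count_uniq_mem _ uniq_L) aL.
by rewrite addn1 subSS.
Qed.

Lemma scanl_pairmap_subn (x : nat) (s : seq nat) :
  path leq x s -> scanl addn x (pairmap (fun a b => b - a)%N x s) = s.
Proof. by elim: s x => [|y s IH] x //= /andP[xy ys]; rewrite subnKC // IH. Qed.

Lemma scanl_rowlens (S : seq nat) (n : nat) :
  sorted ltn S -> all (fun s => 0 < s < n)%N S ->
  scanl addn 0 (rowlens S n) = rcons S n.
Proof.
move=> sortS rangeS; apply: scanl_pairmap_subn.
rewrite rcons_path path_min_sorted; last by apply/allP => s /(allP rangeS) /andP[/ltnW].
rewrite (sub_sorted (fun _ _ => @ltnW _ _) sortS) /=.
have := mem_last 0 S; rewrite inE => /predU1P[-> //|lastS].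
by have /andP[_ /ltnW] := allP rangeS _ lastS.
Qed.

Lemma face_map (A B : Type) (f : A -> B) (s : seq A) (i : nat) :
  face (map f s) i = map f (face s i).
Proof. by rewrite /face map_cat map_take map_drop. Qed.

Lemma nth_notin_face (T : eqType) (x0 : T) (s : seq T) (i : nat) :
  uniq s -> (i < size s)%N -> nth x0 s i \notin face s i.
Proof.
move=> + lt_i_s; rewrite -{1}(cat_take_drop i s) (drop_nth x0 lt_i_s) cat_uniq /=.
case/and4P=> _ /norP[notin_take _] notin_drop _.
by rewrite mem_cat negb_or notin_take.
Qed.

Lemma ltn_tperm_succ (n : nat) (x y j : 'I_n) (k : nat) :
  x.+1 = y :> nat -> k != y -> (tperm x y j < k)%N = (j < k)%N.
Proof.
move=> succ_xy k_y; have ltn_xy_k : (x < k)%N = (y < k)%N.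
  by rewrite [(y < k)%N]ltn_neqAle eq_sym k_y -succ_xy.
by case: tpermP => [->|->|//]; rewrite ltn_xy_k.
Qed.

Lemma face_fchain_tperm (disp : Order.disp_t) (P : finTBLatticeType disp)
    (n : nat) (S : seq nat) (G : 'I_n -> P) (x y : 'I_n) (i : nat) :
  uniq S -> (i < size S)%N -> x.+1 = y :> nat -> nth 0%N S i = y ->
  face (fchain S (fun p => G (tperm x y p))) i = face (fchain S G) i.
Proof.
move=> S_uniq lt_i_S succ_xy y_def; rewrite /fchain !face_map.
apply/eq_in_map => k k_face; have k_y : k != y.
  by apply: contraNneq (nth_notin_face 0%N S_uniq lt_i_S) => k_y; rewrite y_def -k_y.
rewrite [RHS](reindex_inj (@perm_inj _ (tperm x y))) /=.
by apply: eq_bigl => j; rewrite ltn_tperm_succ.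
Qed.

Lemma coef_boundary_map (T : eqType) (I : finType) (A : pred I)
    (w : I -> int) (ch : I -> seq T) (k : nat) (c : seq T) :
  (forall s, size (ch s) = k) ->
  coef (boundary [seq (w s, ch s) | s <- enum A]) c =
  \sum_(i < k) (-1) ^+ i * \sum_(s in A | face (ch s) i == c) w s.
Proof.
move=> size_ch; rewrite /coef /boundary big_flatten /= big_map big_map big_enum /=.
under eq_bigr => s _ do rewrite big_map size_ch big_mkcond /=.
rewrite exchange_big -{1}(subn0 k) big_mkord /=; apply: eq_bigr => i _.
by rewrite mulr_sumr big_mkcondr.
Qed.

Lemma eq_fchain (disp : Order.disp_t) (P : finTBLatticeType disp)
    (n : nat) (S : seq nat) (f g : 'I_n -> P) :
  f =1 g -> fchain S f = fchain S g.
Proof. by move=> fg; apply: eq_map => k; apply: eq_bigr => j _. Qed.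

Lemma col_perm_mulr (n : nat) (rs : seq nat) (s t : {perm 'I_n}) :
  (forall q, rib_col rs (t q) = rib_col rs q) ->
  Defs.col_perm rs (s * t)%g = Defs.col_perm rs s.
Proof. by move=> t_col; apply: eq_forallb => p; rewrite permM t_col. Qed.

Lemma rib_col_rowlens_pred (S : seq nat) (n : nat) (y : nat) :
  sorted ltn S -> all (fun s => 0 < s < n)%N S -> y \in S ->
  rib_col (rowlens S n) y.-1 = rib_col (rowlens S n) y.
Proof.
move=> sortS rangeS yS; apply: rib_col_pred_partial_sum; rewrite scanl_rowlens //.
  rewrite rcons_uniq (sorted_uniq ltn_trans ltnn sortS) andbT.
  by apply: contraT => /negbNE /(allP rangeS); rewrite ltnn andbF.
by rewrite mem_rcons inE yS orbT.
Qed.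

Theorem proposition5p27 (disp : Order.disp_t) (P : finTBLatticeType disp)
  (n : nat) (S : seq nat) (F : 'I_n -> P) :
  geometric P ->
  rk (\top : P)%O = n ->
  sorted ltn S ->
  all (fun s => (0 < s < n)%N) S ->
  is_basis F ->
  is_cycle (fchain_vF S F).
Proof.
(* The lattice hypotheses only make the chains maximal chains of [P^S]; the
   cancellation is purely combinatorial. *)
move=> _ _ sortS rangeS _ c.
have S_uniq : uniq S := sorted_uniq ltn_trans ltnn sortS.
rewrite /fchain_vF (coef_boundary_map _ _ (k := size S)) => [|s]; last by rewrite size_map.
apply: big1 => i _; set y := nth 0%N S i.
have yS : y \in S := mem_nth 0%N (ltn_ord i).
have /andP[y_gt0 y_lt_n] := allP rangeS y yS.
pose y' : 'I_n := Ordinal y_lt_n.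
pose x : 'I_n := Ordinal (leq_ltn_trans (leq_pred y) y_lt_n).
have succ_xy : x.+1 = y' :> nat := prednK y_gt0.
have x_neq_y : x != y' by rewrite -val_eqE /= ltn_eqF // ltn_predL.
rewrite (sum_sign_perm_eq0 _ x_neq_y) ?mulr0 // => s; rewrite !inE col_perm_mulr => [|q].
  rewrite (@eq_fchain _ _ _ S _ (fun p => F ((s^-1)%g (tperm x y' p)))) => [|p].
    by rewrite (@face_fchain_tperm _ _ _ S (fun p => F ((s^-1)%g p))).
  by rewrite invMg tpermV permM.
have col_xy : rib_col (rowlens S n) x = rib_col (rowlens S n) y'.
  exact: rib_col_rowlens_pred.
by case: tpermP => [->|->|].
Qed.
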